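(* Let $\mu>0$ and $\Sigma=\{0,1,\dots,\mu\}$. The language $\mathcal{L}_{LA}=\{A\in\Sigma^\omega : \text{the limit-average of } A \text{ exists}\}$ is neither $\omega$-regular nor $\omega$-context-free.
   Context: For a sequence $M$, $\mathrm{Sum}(M[0,n-1])=\sum_{j=0}^{n-1}M[j]$. The limit-average of $M$ exists iff $\liminf_{n\to\infty}\frac1n\mathrm{Sum}(M[0,n-1])=\limsup_{n\to\infty}\frac1n\mathrm{Sum}(M[0,n-1])$, and then $\mathrm{LA}(M)$ is this common value. An $\omega$-context-free language is one accepted by a B\''uchi pushdown automaton. *)

From HB Require Import structures.
From mathcomp Require Import all_boot.
From Stdlib Require Import Reals.

Set Implicit Arguments.
Unset Strict Implicit.
Unset Printing Implicit Defensive.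

Definition oword (Sigma : Type) := nat -> Sigma.
Definition olang (Sigma : Type) := oword Sigma -> Prop.

Definition is_limsup (u : nat -> R) (l : R) : Prop :=
  forall eps : R, (0 < eps)%R ->
    (exists N, forall n, (N <= n)%coq_nat -> (u n < l + eps)%R) /\
    (forall N, exists n, (N <= n)%coq_nat /\ (l - eps < u n)%R).

Definition is_liminf (u : nat -> R) (l : R) : Prop :=
  forall eps : R, (0 < eps)%R ->
    (exists N, forall n, (N <= n)%coq_nat -> (l - eps < u n)%R) /\
    (forall N, exists n, (N <= n)%coq_nat /\ (u n < l + eps)%R).

Definition Sum (mu : nat) (M : oword 'I_mu.+1) (n : nat) : nat :=
  \sum_(j < n) (M j : nat).

(* (1/n) Sum(M[0,n-1]), indexed from n = 1 (the value at index k is for n = k+1) *)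
Definition avg (mu : nat) (M : oword 'I_mu.+1) (k : nat) : R :=
  (INR (Sum M k.+1) / INR k.+1)%R.

(* the limit-average exists: liminf = limsup (both finite, the averages lie in [0,mu]) *)
Definition LA_exists (mu : nat) (M : oword 'I_mu.+1) : Prop :=
  exists l : R, is_liminf (avg M) l /\ is_limsup (avg M) l.

Definition L_LA (mu : nat) : olang 'I_mu.+1 := fun A => LA_exists A.
Arguments L_LA mu A : clear implicits.

Record buchi (Sigma : finType) := Buchi {
  bu_Q : finType;
  bu_init : pred bu_Q;
  bu_delta : bu_Q -> Sigma -> bu_Q -> bool;
  bu_acc : pred bu_Q
}.

Definition buchi_accepts (Sigma : finType) (A : buchi Sigma) (w : oword Sigma) : Prop :=
  exists r : nat -> bu_Q A,
    @bu_init _ A (r 0) /\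
    (forall i, @bu_delta _ A (r i) (w i) (r i.+1)) /\
    (forall N, exists i, N <= i /\ @bu_acc _ A (r i)).

Definition omega_regular (Sigma : finType) (L : olang Sigma) : Prop :=
  exists A : buchi Sigma, forall w, L w <-> buchi_accepts A w.

(* A transition from state q, reading a letter (Some a) or nothing (None),
   with top-of-stack Z, goes to a state q' and replaces Z by the word gamma. *)
Record bpda (Sigma : finType) := BPDA {
  pd_Q : finType;
  pd_G : finType;
  pd_q0 : pd_Q;
  pd_z0 : pd_G;
  pd_delta : pd_Q -> option Sigma -> pd_G -> seq (pd_Q * seq pd_G);
  pd_acc : pred pd_Q
}.

(* An accepting run on w: an infinite sequence of configurations (st i, stk i),
   starting in (q0, [:: z0]), each step labelled by lab i (a letter or epsilon);
   pos i counts the letters read before step i; letters read agree with w,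
   the whole word is read, and accepting states are visited infinitely often. *)
Definition bpda_accepts (Sigma : finType) (P : bpda Sigma) (w : oword Sigma) : Prop :=
  exists (st : nat -> pd_Q P) (stk : nat -> seq (pd_G P))
         (lab : nat -> option Sigma) (pos : nat -> nat),
    st 0 = @pd_q0 _ P /\ stk 0 = [:: @pd_z0 _ P] /\ pos 0 = 0 /\
    (forall i, exists (Z : pd_G P) (rest gam : seq (pd_G P)),
        stk i = Z :: rest /\
        (st i.+1, gam) \in @pd_delta _ P (st i) (lab i) Z /\
        stk i.+1 = gam ++ rest) /\
    (forall i, match lab i with
               | Some a => a = w (pos i) /\ pos i.+1 = (pos i).+1
               | None => pos i.+1 = pos i
               end) /\
    (forall n, exists i, n <= pos i) /\
    (forall N, exists i, N <= i /\ @pd_acc _ P (st i)).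

Definition omega_context_free (Sigma : finType) (L : olang Sigma) : Prop :=
  exists P : bpda Sigma, forall w, L w <-> bpda_accepts P w.

From HB Require Import structures.
From mathcomp Require Import all_boot zify.
From Stdlib Require Import Reals Lra Classical IndefiniteDescription.

Set Implicit Arguments.
Unset Strict Implicit.
Unset Printing Implicit Defensive.

(* Call a language pumpable if for every word w in it there are positions
   p 0 < p 1 < ... such that for all a, b with a m < b m the word
   w[0, p 0) w[p (a 0), p (b 0)) w[p (a 1), p (b 1)) ... is again in it.
   Buchi languages are pumpable: take for p the visits of one state that is
   seen infinitely often, with an accepting state between any two of them.
   Buchi pushdown languages are pumpable too: take for p the positions read at
   low points of the run, after which the stack below the top symbol is never
   popped, all sharing one state and one top symbol; the piece of the run
   between two such points can be replayed above any stack bottom.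
   The limit-average language is not pumpable: the word that is mu everywhere
   except for a 0 just before each perfect square has average mu, but repeating
   a short block containing a 0 many times, then a very long block, and so on,
   makes the averages oscillate. *)

Section Splice.
Variable len : nat -> nat.
Hypothesis len_gt0 : forall m, 0 < len m.

Definition seg_start m := \sum_(i < m) len i.

Lemma seg_startS m : seg_start m.+1 = seg_start m + len m.
Proof. by rewrite /seg_start big_ord_recr. Qed.

Lemma seg_start_ge m : m <= seg_start m.
Proof. by elim: m => // m IH; rewrite seg_startS; have := len_gt0 m; lia. Qed.

Fixpoint seg_coord t : nat * nat :=
  if t is t'.+1 then
    let: (m, off) := seg_coord t' in if off.+1 < len m then (m, off.+1) else (m.+1, 0)
  else (0, 0).

Lemma seg_coordP t : let: (m, off) := seg_coord t in off < len m /\ t = seg_start m + off.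
Proof.
elim: t => [|t /=]; first by rewrite /= /seg_start big_ord0.
case: (seg_coord t) => m off [lt_off ->]; case: ifP => [lt_off1|]; first by split; lia.
by rewrite seg_startS; split; [apply: len_gt0 | lia].
Qed.

Lemma seg_coord_shift m off : seg_coord (seg_start m) = (m, 0) -> off < len m ->
  seg_coord (seg_start m + off) = (m, off).
Proof.
move=> start_m; elim: off => [_|off IH lt_off]; first by rewrite addn0.
by rewrite addnS /= IH ?lt_off //; lia.
Qed.

Lemma seg_coord_start m : seg_coord (seg_start m) = (m, 0).
Proof.
elim: m => [|m IH]; first by rewrite /seg_start big_ord0.
have lt_last : (len m).-1 < len m by have := len_gt0 m; lia.
have -> : seg_start m.+1 = (seg_start m + (len m).-1).+1
  by rewrite seg_startS; have := len_gt0 m; lia.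
by rewrite /= seg_coord_shift // prednK ?ltnn.
Qed.

Lemma seg_coord_seg m off : off < len m -> seg_coord (seg_start m + off) = (m, off).
Proof. exact/seg_coord_shift/seg_coord_start. Qed.

Definition splice T (pre : nat -> T) (F : nat -> nat -> T) c t : T :=
  if t < c then pre t else let: (m, off) := seg_coord (t - c) in F m off.

Lemma splice_pre T pre F c t : t < c -> @splice T pre F c t = pre t.
Proof. by rewrite /splice => ->. Qed.

Lemma splice_seg T pre F c m off : off < len m ->
  @splice T pre F c (c + seg_start m + off) = F m off.
Proof.
move=> lt_off; rewrite /splice ifF; last lia.
by rewrite (_ : _ - c = seg_start m + off) ?seg_coord_seg //; lia.
Qed.

Lemma splice_cases c t : t < c \/ exists m off, off < len m /\ t = c + seg_start m + off.
Proof.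
case: (ltnP t c) => [|le_ct]; [by left | right].
have := seg_coordP (t - c); case: (seg_coord _) => m off [lt_off e].
by exists m, off; split => //; lia.
Qed.

End Splice.

(* [x] on [0, p 0), followed for m = 0, 1, ... by the block [g m (x i)],
   [p (a m) <= i < p (b m)]. *)
Definition pump T (x : nat -> T) (g : nat -> T -> T) (p a b : nat -> nat) : nat -> T :=
  splice (fun m => p (b m) - p (a m)) x (fun m off => g m (x (p (a m) + off))) (p 0).

Definition pump_word T (x : nat -> T) := pump x (fun _ u => u).

Definition pumpable (Sigma : Type) (L : olang Sigma) : Prop :=
  forall w, L w -> exists p : nat -> nat, (forall k, p k < p k.+1) /\
    forall a b : nat -> nat, (forall m, a m < b m) -> L (pump_word w p a b).

Lemma pumpable_ext (Sigma : Type) (L L' : olang Sigma) :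
  (forall w, L w <-> L' w) -> pumpable L' -> pumpable L.
Proof.
move=> eqL pumpL' w /eqL /pumpL' [p [p_incr Hp]].
by exists p; split=> // a b /Hp /eqL.
Qed.

Section Increasing.
Variable p : nat -> nat.
Hypothesis p_incr : forall k, p k < p k.+1.

Lemma incr_lt i j : i < j -> p i < p j.
Proof. exact: (homo_ltn ltn_trans p_incr). Qed.

Lemma incr_le i j : i <= j -> p i <= p j.
Proof. exact: (homo_leq leqnn leq_trans (fun k => ltnW (p_incr k))). Qed.

Lemma incr_ge k : k <= p k.
Proof. by elim: k => // k IH; apply: leq_ltn_trans IH (p_incr k). Qed.

End Increasing.

Section Pump.
Variables (T K : Type) (x : nat -> T) (g : nat -> T -> T) (I a b : nat -> nat).
Hypothesis I_incr : forall k, I k < I k.+1.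
Hypothesis lt_ab : forall m, a m < b m.

Let len m := I (b m) - I (a m).
Let y := pump x g I a b.

Lemma pump_len_gt0 m : 0 < len m.
Proof. by have := incr_lt I_incr (lt_ab m); rewrite /len; lia. Qed.

Lemma pump_seg m off : off < len m ->
  y (I 0 + seg_start len m + off) = g m (x (I (a m) + off)).
Proof. exact: (splice_seg pump_len_gt0). Qed.

Lemma pump_seg_head m : y (I 0 + seg_start len m) = g m (x (I (a m))).
Proof. by have := pump_seg (pump_len_gt0 m); rewrite !addn0. Qed.

Lemma pump_head (kappa : T -> K) :
  kappa (g 0 (x (I (a 0)))) = kappa (x (I 0)) -> kappa (y 0) = kappa (x 0).
Proof.
move=> junction0; case: (posnP (I 0)) => [I0_eq0|I0_gt0]; last by rewrite /y /pump splice_pre.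
by have := pump_seg_head 0; rewrite /seg_start big_ord0 I0_eq0 => ->; rewrite junction0 I0_eq0.
Qed.

(* [E] may look at its target only through [kappa]; consecutive blocks must
   agree there at their junctions. *)
Lemma pump_steps (E : T -> T -> Prop) (kappa : T -> K) :
  (forall u v v', kappa v = kappa v' -> E u v -> E u v') ->
  (forall i, i < I 0 -> E (x i) (x i.+1)) ->
  (forall m i, I (a m) <= i < I (b m) -> E (g m (x i)) (g m (x i.+1))) ->
  kappa (g 0 (x (I (a 0)))) = kappa (x (I 0)) ->
  (forall m, kappa (g m.+1 (x (I (a m.+1)))) = kappa (g m (x (I (b m))))) ->
  forall t, E (y t) (y t.+1).
Proof.
move=> E_kappa pre_steps seg_steps junction0 junction t.
case: (splice_cases pump_len_gt0 (I 0) t) => [lt_t|[m [off [lt_off ->]]]].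
  have y_t : y t = x t by rewrite /y /pump splice_pre.
  case: (ltnP t.+1 (I 0)) => [lt_t1|ge_t1].
    by rewrite y_t /y /pump splice_pre //; apply: pre_steps.
  have e : t.+1 = I 0 + seg_start len 0 by rewrite /seg_start big_ord0; lia.
  rewrite y_t e pump_seg_head; apply: (E_kappa _ _ _ (esym junction0)).
  by rewrite (_ : I 0 = t.+1); [apply: pre_steps | lia].
have in_seg : I (a m) <= I (a m) + off < I (b m) by rewrite /len in lt_off; lia.
rewrite -addnS pump_seg //; case: (ltnP off.+1 (len m)) => [lt_off1|ge_off1].
  by rewrite pump_seg // addnS; apply: seg_steps.
have -> : I 0 + seg_start len m + off.+1 = I 0 + seg_start len m.+1.
  by rewrite seg_startS; lia.
rewrite pump_seg_head; apply: (E_kappa _ _ _ (esym (junction m))).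
rewrite (_ : I (b m) = (I (a m) + off).+1); first exact: seg_steps.
by rewrite /len in ge_off1; lia.
Qed.

Lemma pump_inf (Q : T -> Prop) :
  (forall m, exists2 i, I (a m) <= i < I (b m) & Q (g m (x i))) ->
  forall N, exists t, N <= t /\ Q (y t).
Proof.
move=> seg_Q N; have [i lt_i Qi] := seg_Q N.
exists (I 0 + seg_start len N + (i - I (a N))); split.
  by have := seg_start_ge pump_len_gt0 N; lia.
by rewrite pump_seg ?subnKC //; rewrite /len; lia.
Qed.

End Pump.

Lemma pump_word_map T U (f : T -> U) (x : nat -> T) p a b t :
  f (pump_word x p a b t) = pump_word (f \o x) p a b t.
Proof. by rewrite /pump_word /pump /splice; case: ifP => //; case: seg_coord. Qed.

Lemma inf_often_pigeonhole (K : finType) (key : nat -> K) (G : nat -> Prop) :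
  (forall N, exists n, N <= n /\ G n) ->
  exists k, forall N, exists n, N <= n /\ G n /\ key n = k.
Proof.
move=> G_inf; apply: NNPP => no_key.
have bounded k : exists N, forall n, N <= n -> G n -> key n <> k.
  apply: NNPP => unbounded; apply: no_key; exists k => N; apply: NNPP => none.
  by apply: unbounded; exists N => n le_Nn Gn key_n; apply: none; exists n.
have [bound Hbound] := functional_choice _ bounded.
have [n [le_n Gn]] := G_inf (\max_k bound k).
by apply: (Hbound (key n) n) => //; exact: leq_trans (leq_bigmax (key n)) le_n.
Qed.

Lemma chain_choice (P : nat -> Prop) (R : nat -> nat -> Prop) :
  (forall n, exists n', P n' /\ R n n') ->
  exists I : nat -> nat, forall k, P (I k) /\ R (I k) (I k.+1).
Proof.
move=> next_ex; have [next Hnext] := functional_choice _ next_ex.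
exists (fun k => iter k.+1 next 0) => k /=.
by split; [case: (Hnext (iter k next 0)) | case: (Hnext (next (iter k next 0)))].
Qed.

Lemma select_indices (K : finType) (key : nat -> K) (G Acc : nat -> Prop) (pos : nat -> nat) :
  (forall N, exists n, N <= n /\ G n) -> (forall N, exists n, N <= n /\ Acc n) ->
  (forall i, pos i <= pos i.+1) -> (forall n, exists i, n <= pos i) ->
  exists I : nat -> nat, (forall k, I k < I k.+1) /\
    (forall k, G (I k) /\ key (I k) = key (I 0)) /\
    (forall k, exists2 j, I k <= j < I k.+1 & Acc j) /\
    (forall k, pos (I k) < pos (I k.+1)).
Proof.
move=> G_inf Acc_inf pos_step pos_unbounded.
have pos_mono : {homo pos : i j / i <= j} := homo_leq leqnn leq_trans pos_step.
have [k0 k0_inf] := inf_often_pigeonhole key G_inf.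
have [I HI] : exists I : nat -> nat, forall k, (G (I k) /\ key (I k) = k0) /\
    ((exists2 j, I k <= j < I k.+1 & Acc j) /\ pos (I k) < pos (I k.+1)).
  apply: (chain_choice (P := fun n => G n /\ key n = k0)
    (R := fun n n' => (exists2 j, n <= j < n' & Acc j) /\ pos n < pos n')) => n.
  have [i le_i] := pos_unbounded (pos n).+1.
  have [j [le_j Acc_j]] := Acc_inf (n + i); have [n' [lt_jn' Gn']] := k0_inf j.+1.
  exists n'; split=> //; split; first by exists j => //; lia.
  by apply: (leq_trans le_i); apply: pos_mono; lia.
exists I; split; first by move=> k; have [_ [[j /andP[le_j lt_j] _] _]] := HI k; lia.
split; first by move=> k; have [[Gk ->] _] := HI k; have [[_ ->] _] := HI 0.
by split=> k; have [_ []] := HI k.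
Qed.

Lemma buchi_pumpable (Sigma : finType) (A : buchi Sigma) : pumpable (buchi_accepts A).
Proof.
move=> w [r [r_init [r_step r_acc]]].
have [I [I_incr [I_key [I_acc _]]]] := select_indices r (G := fun _ => True)
  (pos := fun i => i) (fun N => ex_intro _ N (conj (leqnn N) Logic.I)) r_acc
  (fun i => leqnSn i) (fun n => ex_intro _ n (leqnn n)).
exists I; split=> // a b lt_ab.
pose x i := (r i, w i); pose y := pump_word x I a b.
have r_key m : r (I m) = r (I 0) := proj2 (I_key m).
exists (fun t => (y t).1); split; [|split].
- by rewrite /y /pump_word (pump_head I_incr lt_ab (x := x) (g := fun _ u => u)
    (kappa := fst) (r_key (a 0))).
- move=> t; have -> : pump_word w I a b t = (y t).2 by rewrite /y (pump_word_map snd).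
  apply: (pump_steps I_incr lt_ab (x := x) (g := fun _ u => u) (kappa := fst)
    (E := fun u v => bu_delta u.1 u.2 v.1)).
  + by move=> u v v' ->.
  + by move=> i _; apply: r_step.
  + by move=> m i _; apply: r_step.
  + exact: r_key.
  + by move=> m; rewrite /= !r_key.
apply: (pump_inf I_incr lt_ab (x := x) (g := fun _ u => u) (Q := fun u => bu_acc u.1)) => m.
have [j /andP[le_j lt_j] acc_j] := I_acc (a m).
by exists j => //; rewrite le_j /=; exact: leq_trans lt_j (incr_le I_incr (lt_ab m)).
Qed.

Section BpdaRuns.
Variables (Sigma : finType) (P : bpda Sigma).

(* A configuration, the label of the transition taken from it, and the number
   of letters read before it. *)
Record conf := Conf { cst : pd_Q P; cstk : seq (pd_G P); clab : option Sigma; cpos : nat }.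

Definition pd_move (u v : conf) : Prop :=
  (exists Z rest gam, cstk u = Z :: rest /\
     (cst v, gam) \in pd_delta (cst u) (clab u) Z /\ cstk v = gam ++ rest) /\
  cpos v = (if clab u is Some _ then (cpos u).+1 else cpos u).

Lemma pd_move_eq u v v' : (cst v, cstk v, cpos v) = (cst v', cstk v', cpos v') ->
  pd_move u v -> pd_move u v'.
Proof. by case: v v' => ? ? ? ? [? ? ? ?] /= [-> -> ->]. Qed.

Definition pd_run (w : oword Sigma) (x : nat -> conf) : Prop :=
  [/\ (cst (x 0), cstk (x 0), cpos (x 0)) = (pd_q0 P, [:: pd_z0 P], 0),
      forall i, pd_move (x i) (x i.+1),
      forall i l, clab (x i) = Some l -> l = w (cpos (x i)),
      forall n, exists i, n <= cpos (x i)
    & forall N, exists i, N <= i /\ pd_acc (cst (x i))].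

Lemma bpda_acceptsP w : bpda_accepts P w <-> exists x, pd_run w x.
Proof.
split=> [[st [stk [lab [pos [st0 [stk0 [pos0 [steps [reads [unbounded acc]]]]]]]]]]|].
  exists (fun i => Conf (st i) (stk i) (lab i) (pos i)); split => //=.
  - by rewrite st0 stk0 pos0.
  - move=> i; split; first exact: steps.
    by have := reads i; case: (lab i) => [l []|].
  - by move=> i l lab_i; have := reads i; rewrite lab_i => -[].
move=> [x [[st0 stk0 pos0] moves reads unbounded acc]].
exists (cst \o x), (cstk \o x), (clab \o x), (cpos \o x).
do 3!split => //; split; first by move=> i; have [] := moves i.
split => // i /=; have [_ ->] := moves i.
by case E: (clab (x i)) => [l|] //; rewrite (reads i l E).
Qed.

Definition rebase (B R s : seq (pd_G P)) := take (size s - size B) s ++ R.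

Lemma rebase_cat B R s : rebase B R (s ++ B) = s ++ R.
Proof. by rewrite /rebase size_cat addnK take_size_cat. Qed.

Definition reconf B R (shift : nat -> nat) (u : conf) : conf :=
  Conf (cst u) (rebase B R (cstk u)) (clab u) (shift (cpos u)).

Lemma reconf_move B R shift u v : (exists2 s, s != [::] & cstk u = s ++ B) ->
  shift (cpos u).+1 = (shift (cpos u)).+1 -> pd_move u v ->
  pd_move (reconf B R shift u) (reconf B R shift v).
Proof.
move=> [[//|Z1 s] _ stk_u] shiftS [[Z [rest [gam [stk_u' [delta_uv stk_v]]]]] pos_v].
split; last by rewrite /= pos_v; case: (clab u).
move: stk_u'; rewrite stk_u => -[Z1_eq rest_eq].
exists Z, (s ++ R), gam; rewrite /reconf /= stk_u rebase_cat Z1_eq.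
by rewrite stk_v -rest_eq (catA gam s B) rebase_cat catA.
Qed.

End BpdaRuns.

Lemma ex_minimal (Q : nat -> Prop) :
  (exists n, Q n) -> exists n, Q n /\ forall m, Q m -> n <= m.
Proof.
move=> [n]; elim/ltn_ind: n => n IH Qn.
case: (classic (exists2 m, m < n & Q m)) => [[m lt_mn Qm]|none]; first exact: IH m lt_mn Qm.
by exists n; split=> // m Qm; rewrite leqNgt; apply/negP => lt_mn; apply: none; exists m.
Qed.

Section LowPoints.
Variables (Sigma : finType) (P : bpda Sigma) (x : nat -> conf P).
Hypothesis x_move : forall i, pd_move (x i) (x i.+1).

Lemma cpos_step i : cpos (x i) <= cpos (x i.+1).
Proof. by have [_ ->] := x_move i; case: (clab (x i)). Qed.

Lemma cpos_mono : {homo (fun i => cpos (x i)) : i j / i <= j}.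
Proof. exact: (homo_leq leqnn leq_trans cpos_step). Qed.

Definition top i := head (pd_z0 P) (cstk (x i)).
Definition base i := behead (cstk (x i)).

Lemma cstk_top_base i : cstk (x i) = top i :: base i.
Proof. by rewrite /top /base; have [[Z [rest [gam [-> _]]]] _] := x_move i. Qed.

Definition low_point i := forall t, i <= t -> exists2 s, s != [::] & cstk (x t) = s ++ base i.

Lemma low_points_inf N : exists i, N <= i /\ low_point i.
Proof.
pose sizes h := exists i, N <= i /\ size (cstk (x i)) = h.
have [_ [[i [le_Ni <-]] min_i]] :=
  ex_minimal (ex_intro sizes _ (ex_intro _ N (conj (leqnn N) erefl))).
exists i; split=> // t le_it; rewrite -(subnKC le_it); elim: (t - i) => [|d [s s_nil stk_d]].
  by exists [:: top i]; rewrite ?addn0 ?cstk_top_base.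
have [[Z [rest [gam [stk_Z [_ stk_next]]]]] _] := x_move (i + d).
move: s_nil stk_d; case: s => [//|Z' s] _ stk_d; move: stk_Z; rewrite stk_d => -[_ rest_eq].
exists (gam ++ s); last by rewrite addnS stk_next -rest_eq catA.
have le_N : N <= (i + d).+1 by lia.
have := min_i _ (ex_intro _ _ (conj le_N erefl)).
rewrite stk_next -rest_eq catA size_cat cstk_top_base /=.
by case: (gam ++ s) => //; rewrite add0n ltnn.
Qed.

End LowPoints.

Section PumpedRun.
Variables (Sigma : finType) (P : bpda Sigma) (w : oword Sigma) (x : nat -> conf P).
Hypothesis x_move : forall i, pd_move (x i) (x i.+1).
Hypothesis x_reads : forall i l, clab (x i) = Some l -> l = w (cpos (x i)).
Variables (I a b : nat -> nat).
Hypothesis I_incr : forall k, I k < I k.+1.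
Hypothesis I_low_key : forall k, low_point x (I k) /\
  (cst (x (I k)), top x (I k)) = (cst (x (I 0)), top x (I 0)).
Hypothesis I_pos : forall k, cpos (x (I k)) < cpos (x (I k.+1)).
Hypothesis I_acc : forall k, exists2 j, I k <= j < I k.+1 & pd_acc (cst (x j)).
Hypothesis lt_ab : forall m, a m < b m.

Let pI k := cpos (x (I k)).
Let pl m := pI (b m) - pI (a m).
Let B m := base x (I (a m)).

Fixpoint new_base m :=
  if m is m'.+1 then behead (rebase (B m') (new_base m') (cstk (x (I (b m')))))
  else base x (I 0).

Definition seg_conf m :=
  reconf (B m) (new_base m) (fun n => pI 0 + seg_start pl m + (n - pI (a m))).

Let y := pump x seg_conf I a b.
Let kappa (u : conf P) := (cst u, cstk u, cpos u).

Lemma I_cst k : cst (x (I k)) = cst (x (I 0)).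
Proof. by have [_ [-> _]] := I_low_key k. Qed.

Lemma I_cstk k : cstk (x (I k)) = top x (I 0) :: base x (I k).
Proof. by have [_ [_ <-]] := I_low_key k; apply: cstk_top_base. Qed.

Lemma pl_gt0 m : 0 < pl m.
Proof. by have := incr_lt I_pos (lt_ab m); rewrite /pl /pI; lia. Qed.

Lemma seg_conf_start m : kappa (seg_conf m (x (I (a m)))) =
  (cst (x (I 0)), top x (I 0) :: new_base m, pI 0 + seg_start pl m).
Proof.
rewrite /kappa /= I_cst I_cstk -/(B m) -cat1s rebase_cat.
by rewrite subnn addn0.
Qed.

Lemma junction0 : kappa (seg_conf 0 (x (I (a 0)))) = kappa (x (I 0)).
Proof. by rewrite seg_conf_start /= /seg_start big_ord0 addn0 -I_cstk. Qed.

Lemma junction m : kappa (seg_conf m.+1 (x (I (a m.+1)))) = kappa (seg_conf m (x (I (b m)))).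
Proof.
rewrite seg_conf_start /kappa /= I_cst seg_startS /pl.
have [low _] := I_low_key (a m).
have [s s_nil stk_b] := low _ (incr_le I_incr (ltnW (lt_ab m))).
rewrite stk_b -/(B m) rebase_cat; congr (_, _, _); last by rewrite /pI; lia.
by move: stk_b s_nil; rewrite I_cstk; case: s => [//|Z s] -[-> _].
Qed.

Lemma y_moves t : pd_move (y t) (y t.+1).
Proof.
apply: (pump_steps I_incr lt_ab (x := x) (g := seg_conf) (E := @pd_move _ P) (kappa := kappa)).
- by move=> u v v' /pd_move_eq; apply.
- by move=> i _; apply: x_move.
- move=> m i /andP[le_i _]; apply: reconf_move; last exact: x_move.
    by have [low _] := I_low_key (a m); apply: low.
  have := cpos_mono x_move le_i; rewrite -/(pI (a m)); lia.
- exact: junction0.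
- exact: junction.
Qed.

Lemma y_reads t l : clab (y t) = Some l -> l = pump_word w pI a b (cpos (y t)).
Proof.
have reads_lt i : clab (x i) = Some l -> cpos (x i) < cpos (x i.+1).
  by have [_ ->] := x_move i => ->.
case: (splice_cases (pump_len_gt0 I_incr lt_ab) (I 0) t) => [lt_t|[m [off [lt_off ->]]]].
  rewrite /y /pump splice_pre // => lab_t.
  rewrite /pump_word /pump splice_pre -?(x_reads lab_t) //.
  exact: leq_trans (reads_lt _ lab_t) (cpos_mono x_move lt_t).
rewrite /y (pump_seg x seg_conf I_incr lt_ab) //= => lab_i; rewrite {1}(x_reads lab_i).
have le_i := cpos_mono x_move (leq_addr off (I (a m))).
have lt_i : I (a m) + off < I (b m) by lia.
have := leq_trans (reads_lt _ lab_i) (cpos_mono x_move lt_i) => lt_b.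
rewrite /pump_word /pump (splice_seg pl_gt0); first by rewrite /pI subnKC.
by rewrite /pl /pI; lia.
Qed.

Lemma y_unbounded n : exists t, n <= cpos (y t).
Proof.
exists (I 0 + seg_start (fun m => I (b m) - I (a m)) n).
rewrite /y (pump_seg_head x seg_conf I_incr lt_ab) /= subnn addn0.
by have := seg_start_ge pl_gt0 n; lia.
Qed.

Lemma y_acc N : exists t, N <= t /\ pd_acc (cst (y t)).
Proof.
apply: (pump_inf I_incr lt_ab (x := x) (g := seg_conf) (Q := fun u => pd_acc (cst u))) => m.
have [j /andP[le_j lt_j] acc_j] := I_acc (a m).
by exists j => //; rewrite le_j /=; exact: leq_trans lt_j (incr_le I_incr (lt_ab m)).
Qed.

Lemma pumped_run : (cst (x 0), cstk (x 0), cpos (x 0)) = (pd_q0 P, [:: pd_z0 P], 0) ->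
  pd_run (pump_word w pI a b) y.
Proof.
move=> x_init; split; [|exact: y_moves|exact: y_reads|exact: y_unbounded|exact: y_acc].
by rewrite -x_init; apply: (pump_head I_incr lt_ab (kappa := kappa) junction0).
Qed.

End PumpedRun.

Lemma bpda_pumpable (Sigma : finType) (P : bpda Sigma) : pumpable (bpda_accepts P).
Proof.
move=> w /bpda_acceptsP [x [x_init x_move x_reads x_unbounded x_acc]].
have [I [I_incr [I_low_key [I_acc I_pos]]]] := select_indices (fun i => (cst (x i), top x i))
  (low_points_inf x_move) x_acc (cpos_step x_move) x_unbounded.
exists (fun k => cpos (x (I k))); split => // a b lt_ab; apply/bpda_acceptsP.
by eexists; apply: (pumped_run x_move x_reads I_incr I_low_key I_pos I_acc lt_ab x_init).
Qed.

Lemma Sum_add (mu : nat) (M : oword 'I_mu.+1) n d :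
  Sum M (n + d) = Sum M n + \sum_(j < d) (M (n + j) : nat).
Proof. by rewrite /Sum big_split_ord. Qed.

Lemma Sum_le (mu : nat) (M : oword 'I_mu.+1) n : Sum M n <= mu * n.
Proof.
elim: n => [|n IH]; first by rewrite /Sum big_ord0.
by rewrite /Sum big_ord_recr /= -/(Sum M n) mulnS; have := ltn_ord (M n); lia.
Qed.

(* The letter [mu] everywhere, except a [0] at each position [k ^ 2 - 1]. *)
Definition sq_word (mu : nat) : oword 'I_mu.+1 :=
  fun n => if Nat.sqrt n.+1 == Nat.sqrt n then ord_max else ord0.

Lemma Sum_sq_word mu N : Sum (sq_word mu) N + mu * Nat.sqrt N = mu * N.
Proof.
elim: N => [|N IH]; first by rewrite /Sum big_ord0.
rewrite /Sum big_ord_recr /= -/(Sum _ N); set S := Sum _ N in IH *.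
rewrite /sq_word; case: (Nat.sqrt_succ_or N) => ->; last by rewrite eqxx mulnS /=; lia.
by rewrite ifF /=; [rewrite mulnS; lia | apply/eqP; lia].
Qed.

Lemma sqrt_bound D N : D * D <= N -> D * Nat.sqrt N <= N.
Proof.
move=> le_DN; have [le_sq _] := Nat.sqrt_spec N (le_0_n N); move/leP: le_sq => le_sq.
case: (leqP D (Nat.sqrt N)) => [le_D|lt_D].
  by apply: leq_trans le_sq; apply: leq_mul.
by apply: leq_trans le_DN; apply: leq_mul => //; apply: ltnW.
Qed.

Local Open Scope R_scope.

Lemma INR_div_le (a b c d : nat) : (0 < b)%nat -> (0 < d)%nat -> (a * d <= c * b)%nat ->
  INR a / INR b <= INR c / INR d.
Proof.
move=> /ltP/lt_0_INR b_gt0 /ltP/lt_0_INR d_gt0 /leP/le_INR; rewrite !mult_INR => le_ad.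
apply: (Rmult_le_reg_r (INR b * INR d)); first exact: Rmult_lt_0_compat.
have -> : INR a / INR b * (INR b * INR d) = INR a * INR d by field; lra.
by have -> : INR c / INR d * (INR b * INR d) = INR c * INR b by field; lra.
Qed.

Lemma LA_of_bounds (u : nat -> R) l : (forall n, u n <= l) ->
  (forall eps, 0 < eps -> exists N, forall n, (N <= n)%nat -> l - eps < u n) ->
  is_liminf u l /\ is_limsup u l.
Proof.
move=> le_l near_l; split=> eps eps_gt0; have [N HN] := near_l eps eps_gt0.
- split; first by exists N => n /leP /HN.
  by move=> N'; exists N'; split=> //; have := le_l N'; lra.
- split; first by exists 0%nat => n _; have := le_l n; lra.
  by move=> N'; exists (N + N')%nat; split; [apply/leP; lia | apply: HN; lia].
Qed.

Lemma oscillating_not_LA (u : nat -> R) (lo hi : R) : lo < hi ->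
  (forall N, exists n, (N <= n)%nat /\ u n <= lo) ->
  (forall N, exists n, (N <= n)%nat /\ hi <= u n) ->
  ~ exists l, is_liminf u l /\ is_limsup u l.
Proof.
move=> lt_lo_hi lo_inf hi_inf [l [inf_l sup_l]].
have eps_gt0 : 0 < (hi - lo) / 2 by lra.
have [[N1 above] _] := inf_l _ eps_gt0; have [[N2 below] _] := sup_l _ eps_gt0.
have [n1 [le_n1 u_n1]] := lo_inf N1; have [n2 [le_n2 u_n2]] := hi_inf N2.
have := above n1 (elimT leP le_n1); have := below n2 (elimT leP le_n2); lra.
Qed.

Lemma sq_word_LA mu : L_LA mu (sq_word mu).
Proof.
exists (INR mu); apply: LA_of_bounds => [n|eps eps_gt0].
  have -> : INR mu = INR mu / INR 1 by rewrite /= Rdiv_1_r.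
  by apply: INR_div_le => //; rewrite muln1 Sum_le.
have [D lt_mu] := INR_archimed eps (INR mu) eps_gt0.
exists (D.+1 * D.+1)%nat => n le_n.
have := Sum_sq_word mu n.+1; have := sqrt_bound (leqW le_n).
set S := Sum _ _; set s := Nat.sqrt _ => le_s sum_eq.
have le_avg : INR (mu * D) / INR D.+1 <= avg (sq_word mu) n.
  apply: INR_div_le => //.
  have := leq_mul (leqnn mu) le_s; rewrite mulSn; nia.
apply: Rlt_le_trans le_avg.
rewrite mult_INR S_INR; apply: (Rmult_lt_reg_r (INR D + 1)); first by have := pos_INR D; lra.
have -> : INR mu * INR D / (INR D + 1) * (INR D + 1) = INR mu * INR D.
  by field; have := pos_INR D; lra.
have := pos_INR D; have := pos_INR mu; nra.
Qed.

Local Close Scope R_scope.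

Section SqWordNotPumpable.
Variables (mu : nat) (p : nat -> nat).
Hypothesis mu_gt0 : 0 < mu.
Hypothesis p_incr : forall k, p k < p k.+1.

Let w := sq_word mu.
Let c := p 0.
Let J := c.+1 * c.+1.
Let blk := p J - c.
Let D := 2 * blk.+1.
Let K n := 4 * D * D + 2 * D * n + 2 * p J.

Lemma c_lt_pJ : c < p J.
Proof. by apply: incr_lt; rewrite /J. Qed.

Lemma J_lt_K n : J < K n.
Proof. by have := incr_ge p_incr J; rewrite /K /J; lia. Qed.

(* The low block [w[c, p J)] has length [blk] and contains a [0]; repeating it
   pushes the average below [mu * (2 * blk) / D].  The high block
   [w[p J, p (K n))], placed at length [n], pushes it back above
   [mu * (2 * blk + 1) / D].  A state records the current length, the length
   at the last high block, and the number of low blocks since; a high block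
   comes once that number reaches the length at the last high block. *)
Record state := State { s_len : nat; s_start : nat; s_lows : nat }.

Definition high (s : state) := (s_start s <= s_lows s) && (0 < s_lows s).

Fixpoint sched m : state :=
  if m is m'.+1 then
    let: State n n0 k := sched m' in
    if high (sched m') then State (n + (p (K n) - p J)) (n + (p (K n) - p J)) 0
    else State (n + blk) n0 k.+1
  else State c c 0.

Let a m := if high (sched m) then J else 0.
Let b m := if high (sched m) then K (s_len (sched m)) else J.
Let z := pump_word w p a b.
Let L m := s_len (sched m).

Lemma lt_ab m : a m < b m.
Proof. by rewrite /a /b; case: ifP => _; [apply: J_lt_K | rewrite /J]. Qed.

Lemma block_len_gt0 m : 0 < p (b m) - p (a m).
Proof. by have := incr_lt p_incr (lt_ab m); lia. Qed.

Lemma sched_len m : c + seg_start (fun m => p (b m) - p (a m)) m = L m.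
Proof.
elim: m => [|m IH]; first by rewrite /seg_start big_ord0 addn0.
by rewrite seg_startS addnA IH /L /= /a /b; case: (sched m) => n n0 k /=; case: ifP.
Qed.

Lemma Sum_sched_step m :
  Sum z (L m.+1) = Sum z (L m) + (Sum w (p (b m)) - Sum w (p (a m))).
Proof.
have e_b : p (b m) = p (a m) + (p (b m) - p (a m)).
  by have := incr_lt p_incr (lt_ab m); lia.
rewrite -!sched_len seg_startS addnA Sum_add; congr (_ + _).
have := Sum_add w (p (a m)) (p (b m) - p (a m)); rewrite -e_b => ->; rewrite addKn.
by apply: eq_bigr => j _; rewrite /z /pump_word /pump (splice_seg block_len_gt0).
Qed.

Lemma low_block_deficit : Sum w (p J) + mu <= Sum w c + mu * blk.
Proof.
have := Sum_sq_word mu (p J); have := Sum_sq_word mu c.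
have lt_sqrt : Nat.sqrt c < Nat.sqrt (p J).
  have /leP := Nat.sqrt_le_lin c; suff /leP : c.+1 <= Nat.sqrt (p J) by lia.
  by apply/leP; apply Nat.sqrt_le_square; apply/leP; apply: incr_ge.
have := leq_mul (leqnn mu) lt_sqrt; have := leq_mul (leqnn mu) (ltnW c_lt_pJ).
by rewrite /w /blk mulnS mulnBr; lia.
Qed.

Lemma sched_inv m : Sum z (L m) + mu * s_lows (sched m) <= mu * L m /\
  L m = s_start (sched m) + s_lows (sched m) * blk.
Proof.
have le_mu_blk : mu <= mu * blk by rewrite leq_pmulr // /blk subn_gt0 c_lt_pJ.
elim: m => [|m [IH1 IH2]].
  by rewrite /L /= muln0 mul0n !addn0; split; first apply: Sum_le.
move: IH1 IH2 (Sum_sched_step m); rewrite /L /a /b /=.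
case: (sched m) => n n0 k /=; case: ifP => _ /= IH1 IH2 step.
  by rewrite muln0 mul0n !addn0; split; first apply: Sum_le.
by rewrite step; have := low_block_deficit; rewrite /w /c mulnS mulnDr mulSn; split; lia.
Qed.

Lemma low_avg m : high (sched m) -> D * Sum z (L m) <= mu * (2 * blk) * L m.
Proof.
have [inv_sum inv_len] := sched_inv m; rewrite /high; move: inv_sum inv_len.
set k := s_lows _; set n0 := s_start _ => inv_sum inv_len /andP[le_k _].
have le_L : L m <= k * blk.+1 by rewrite inv_len mulnS; lia.
have := leq_mul (leqnn D) inv_sum; have := leq_mul (leqnn (2 * mu)) le_L.
by rewrite /D; nia.
Qed.

Lemma high_avg m : high (sched m) -> mu * (2 * blk).+1 * L m.+1 <= D * Sum z (L m.+1).
Proof.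
move=> hi; have len_next : L m.+1 = L m + (p (K (L m)) - p J).
  by rewrite /L /= hi; case: (sched m).
rewrite len_next; have := Sum_sched_step m; rewrite /a /b hi len_next -/(L m) => ->.
set n := L m; set pK := p (K n); set s := Nat.sqrt pK; set t := pK - p J.
have le_K : K n <= pK := incr_ge p_incr _.
have le_Ds : (2 * D) * s <= pK by apply: sqrt_bound; rewrite /K in le_K; lia.
have le_t : (2 * blk).+1 * n + D * s <= t by rewrite /t /D /K in le_K le_Ds *; lia.
have sum_high : mu * t <= Sum w pK - Sum w (p J) + mu * s.
  by have := Sum_sq_word mu pK; have := Sum_le w (p J); rewrite /w /t mulnBr; lia.
have := leq_mul (leqnn mu) le_t; have := leq_mul (leqnn D) sum_high.
by rewrite /D; nia.
Qed.

Lemma high_inf N : exists m, N <= m /\ high (sched m).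
Proof.
suff reach k m : s_start (sched m) + 1 - s_lows (sched m) <= k ->
    exists m', m <= m' /\ high (sched m') by exact: reach _ N (leqnn _).
elim: k m => [|k IH] m; case hi: (high (sched m)); try by exists m.
  by move: hi; rewrite /high; lia.
move=> le_k; have [m' [le_m' hi']] : exists m', m.+1 <= m' /\ high (sched m').
  by apply: IH; move: le_k; rewrite /= hi; case: (sched m) => ? ? ? /=; lia.
by exists m'; split => //; lia.
Qed.

Lemma L_ge m : m <= L m.
Proof. by rewrite -sched_len; have := seg_start_ge block_len_gt0 m; lia. Qed.

Lemma pumped_sq_word_not_LA :
  exists a b : nat -> nat, (forall m, a m < b m) /\ ~ L_LA mu (pump_word w p a b).
Proof.
exists a, b; split; first exact: lt_ab.
pose lo := (INR (mu * (2 * blk)) / INR D)%R.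
pose hi := (INR (mu * (2 * blk).+1) / INR D)%R.
apply: (@oscillating_not_LA _ lo hi).
- apply: Rmult_lt_compat_r; first by apply/Rinv_0_lt_compat/lt_0_INR/ltP.
  by apply/lt_INR/ltP; rewrite ltn_pmul2l.
- move=> N; have [m [le_m hi_m]] := high_inf N.+1; have L_gt0 := L_ge m.
  exists (L m).-1; split; first lia.
  by apply: INR_div_le; rewrite // prednK 1?mulnC ?low_avg //; lia.
move=> N; have [m [le_m hi_m]] := high_inf N; have L_gt0 := L_ge m.+1.
exists (L m.+1).-1; split; first lia.
by apply: INR_div_le; rewrite // prednK 1?[_ * D]mulnC ?high_avg //; lia.
Qed.

End SqWordNotPumpable.

Lemma L_LA_not_pumpable mu : 0 < mu -> ~ pumpable (L_LA mu).
Proof.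
move=> mu_gt0 pump_LA; have [p [p_incr Hp]] := pump_LA _ (sq_word_LA mu).
have [a [b [lt_ab not_LA]]] := pumped_sq_word_not_LA mu_gt0 p_incr.
exact: not_LA (Hp a b lt_ab).
Qed.

Theorem theorem15 (mu : nat) (hmu : 0 < mu) :
  ~ omega_regular (L_LA mu) /\ ~ omega_context_free (L_LA mu).
Proof.
split=> [[A accepts_LA]|[P accepts_LA]]; apply: (L_LA_not_pumpable hmu).
  by apply: (pumpable_ext accepts_LA); apply: buchi_pumpable.
by apply: (pumpable_ext accepts_LA); apply: bpda_pumpable.
Qed.
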